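(* For every $n\geq 1$, the Fibonacci-sum set-graph $G^F_{A^{(n)}}$ is connected.
   Context: Let $\mathcal{F}=\{f_m\}_{m\ge 0}$ be the Fibonacci numbers, $f_0=0$, $f_1=1$, $f_m=f_{m-1}+f_{m-2}$. For $n\in\mathbb{N}$ let $A^{(n)}=\{1,2,\dots,n\}$. The Fibonacci-sum set-graph $G^F_{A^{(n)}}$ is the multigraph (loops and multiple edges allowed) whose vertices are in bijection with the nonempty subsets of $A^{(n)}$; between the vertices corresponding to distinct subsets $S,T$ there is one edge for each pair $(i',j')$ with $i'\in S$, $j'\in T$, $i'\neq j'$ and $i'+j'\in\mathcal{F}$, and at the vertex corresponding to $S$ there is one loop for each pair of distinct elements $i',j'\in S$ with $i'+j'\in\mathcal{F}$. *)

From mathcomp Require Import all_boot.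
From Stdlib Require Import Relation_Operators.
Set Implicit Arguments. Unset Strict Implicit. Unset Printing Implicit Defensive.

Fixpoint fib (m : nat) : nat :=
  match m with
  | 0 => 0
  | 1 => 1
  | (k.+1 as k1).+1 => fib k1 + fib k
  end.

Definition isFib (m : nat) : Prop := exists k, fib k = m.

(* A^(n) = {1,...,n}, realised inside the finite type 'I_n.+1 = {0,...,n}. *)
Definition A (n : nat) : {set 'I_n.+1} := [set i : 'I_n.+1 | 0 < i].

Definition is_vertex (n : nat) (S : {set 'I_n.+1}) : Prop :=
  S \subset A n /\ S != set0.

(* Distinct vertices S, T are joined by at least one edge iff there is a pair
   (i', j') with i' in S, j' in T, i' <> j', i' + j' Fibonacci.
   (Loops and edge multiplicities are irrelevant to connectivity.) *)
Definition adjF (n : nat) (S T : {set 'I_n.+1}) : Prop :=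
  is_vertex S /\ is_vertex T /\ S <> T /\
  exists i j : 'I_n.+1, i \in S /\ j \in T /\ i <> j /\ isFib (i + j).

Definition FibSumSetGraph_connected (n : nat) : Prop :=
  forall S T : {set 'I_n.+1}, is_vertex S -> is_vertex T ->
    clos_refl_trans _ (@adjF n) S T.

(* Every k in {1, ..., n} has a partner j in {1, ..., n}, j <> k, with k + j a
   Fibonacci number: 1 + 2 = 3, and for k >= 2 with f_m <= k < f_(m+1) take
   j = f_(m+1) - k, which is positive and at most f_(m-1) < f_m <= k.  Hence
   for n >= 2 every vertex is adjacent to the full set A^(n) (or equal to it),
   so the graph is a star around A^(n) plus further edges; for n = 1 it has a
   single vertex. *)
From mathcomp Require Import all_boot.
From Stdlib Require Import Relation_Operators.
From mathcomp Require Import zify.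

Set Implicit Arguments.
Unset Strict Implicit.
Unset Printing Implicit Defensive.

Lemma fibSS m : fib m.+2 = fib m.+1 + fib m.
Proof. by []. Qed.

Lemma fib_gt0 m : 0 < fib m.+1.
Proof. by elim: m => // m IH; rewrite fibSS ltn_addr. Qed.

Lemma ltn_fib m : m < fib m.+2.
Proof. by elim: m => // m IH; rewrite fibSS; have := fib_gt0 m; lia. Qed.

Lemma nat_bracket (f : nat -> nat) i m :
  f 0 <= i -> i < f m -> exists k, f k <= i < f k.+1.
Proof.
move=> f0_le; elim: m => [|m IH] lt_i_fm; first by rewrite ltnNge f0_le in lt_i_fm.
by case: (ltnP i (f m)) => [/IH // | le_fm_i]; exists m; rewrite le_fm_i.
Qed.

Lemma fib_partner_lt i : 1 < i -> exists2 j, 0 < j < i & isFib (i + j).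
Proof.
move=> gt1_i.
have [k /andP [lo hi]] :=
  nat_bracket (f := fun k => fib k.+3) gt1_i (ltnW (ltn_fib i.+1)).
have f4 := fibSS k.+2; have f3 := fibSS k.+1; have f1 := fib_gt0 k.
by exists (fib k.+4 - i); [lia | exists k.+4; lia].
Qed.

Lemma fib_partner_in n i : 1 < n -> 0 < i <= n ->
  exists j, [/\ 0 < j <= n, j != i & isFib (i + j)].
Proof.
move=> gt1_n /andP [gt0_i le_i_n].
case: (ltnP 1 i) => [gt1_i | le_i_1].
  have [j /andP [gt0_j lt_j_i] fib_ij] := fib_partner_lt gt1_i.
  by exists j; split; [lia | rewrite neq_ltn lt_j_i | done].
have -> : i = 1 by lia.
by exists 2; split; [lia | done | exists 4].
Qed.

Lemma star_connected (T : eqType) (R : T -> T -> Prop) (P : T -> Prop) (c : T) :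
  (forall x y, R x y -> R y x) -> (forall x, P x -> x != c -> R x c) ->
  forall x y, P x -> P y -> clos_refl_trans T R x y.
Proof.
move=> R_sym to_c.
have rt_to_c x : P x -> clos_refl_trans T R x c.
  by case: (eqVneq x c) => [-> _ | ne Px]; [apply: rt_refl | apply/rt_step/to_c].
move=> x y Px Py; apply: rt_trans (rt_to_c x Px) _.
case: (eqVneq y c) => [-> | ne]; first exact: rt_refl.
exact/rt_step/R_sym/to_c.
Qed.

Lemma adjF_sym n (S T : {set 'I_n.+1}) : adjF S T -> adjF T S.
Proof.
case=> vS [vT [neST [i [j [iS [jT [neij fib_ij]]]]]]].
split=> //; split=> //; split; first by move=> eqTS; apply: neST.
by exists j, i; do !split => //; [move=> eqji; apply: neij | rewrite addnC].
Qed.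

Lemma A_vertex n : 0 < n -> is_vertex (A n).
Proof.
by move=> gt0_n; split => //; apply/set0Pn; exists ord_max; rewrite inE.
Qed.

Lemma adjF_A n (S : {set 'I_n.+1}) : 1 < n -> is_vertex S -> S != A n -> adjF S (A n).
Proof.
move=> gt1_n vS neSA; have [sub_SA /set0Pn [i iS]] := vS.
have gt0_i : 0 < i by have := subsetP sub_SA _ iS; rewrite inE.
have i_in : 0 < i <= n by rewrite gt0_i -ltnS ltn_ord.
have [j [/andP [gt0_j le_j_n] neji fib_ij]] := fib_partner_in gt1_n i_in.
have vA : is_vertex (A n) by apply: A_vertex; lia.
do 3!split => //; first exact/eqP.
exists i, (Ordinal (le_j_n : j < n.+1)); do !split => //; first by rewrite inE.
by move=> eqij; rewrite eqij eqxx in neji.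
Qed.

Lemma A1_eq_set1 : A 1 = [set ord_max].
Proof. by apply/setP; case=> [[|[|]]] //= ?; rewrite !inE. Qed.

Lemma vertex1_eq_A (S : {set 'I_2}) : is_vertex S -> S = A 1.
Proof.
by move=> [+ neS]; rewrite A1_eq_set1 subset1 (negbTE neS) orbF => /eqP.
Qed.

Theorem corollary2p2 (n : nat) (hn : 1 <= n) : FibSumSetGraph_connected n.
Proof.
move=> S T vS vT.
case: (ltnP 1 n) => [gt1_n | le_n_1].
  exact: (star_connected (@adjF_sym n) (fun U => adjF_A gt1_n)).
have eq_n1 : n = 1 by lia.
subst n; rewrite (vertex1_eq_A vS) (vertex1_eq_A vT); exact: rt_refl.
Qed.
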